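(* Fix an agent $P_i$ and a stage $k$, and let $\mathcal A'$ be the (finite, nonempty) set of arms still available to $P_i$ at stage $k$. Each arm $A_j\in\mathcal A'$ has a score $v_j\in[0,1]$ and a fit $e_{ij}\in[0,1]$. Fix the state $s=s_{i,k}$, which is assumed to be the true state, and write $\pi_j:=\pi_{i,k}(s,v_j)$ and $\delta_j:=\delta_{i,k}(v_j)$. Let $\eta=\eta_{i,k}\ge 0$, let $\gamma=\gamma_i>\max_{j\in\mathcal A'}(v_j+e_{ij})$, and let $Q:=q_i-c$, where $q_i\ge1$ is the quota of $P_i$ and $c\ge 0$ is the number of arms that accepted $P_i$ at earlier stages. Assume $\pi_j>0$, $\eta\delta_j<\pi_j$ and $v_j+e_{ij}>0$ for all $j\in\mathcal A'$, and $0<Q<\sum_{j\in\mathcal A'}\pi_j$. For $\mathcal B\subseteq\mathcal A'$ define the loss $$\mathcal L^\dagger[\mathcal B]=\sum_{j\in\mathcal B}(v_j+e_{ij})\big[\eta\delta_j-\pi_j\big]+\gamma\max\Big\{\sum_{j\in\mathcal B}\pi_j-Q,\;0\Big\}.$$ Let $r_j:=(v_j+e_{ij})(\pi_j-\eta\delta_j)/\pi_j>0$, and for $b\ge0$ let $S(b):=\{j\in\mathcal A': r_j\ge b\}$ and $\Pi(b):=\sum_{j\in S(b)}\pi_j$. Define the greedy set $\widehat{\mathcal B}$ as follows. (i) If $\Pi(b)=Q$ for some $b\ge0$, set $\widehat{\mathcal B}:=S(b)$ and $\mathrm{UE}^\dagger:=0$. (ii) Otherwise let $\mathcal B^+:=\bigcap_{b\ge0:\,\Pi(b)>Q}S(b)$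 and $\mathcal B^-:=\bigcup_{b\ge0:\,\Pi(b)<Q}S(b)$. Set $\widehat{\mathcal B}:=\mathcal B^+$ if $$\sum_{j\in\mathcal B^+\setminus\mathcal B^-}(v_j+e_{ij})(\pi_j-\eta\delta_j)\;\ge\;\gamma\sum_{j\in\mathcal B^+}\pi_j-\gamma Q,$$ and $\widehat{\mathcal B}:=\mathcal B^-$ otherwise; and set $$\mathrm{UE}^\dagger:=\Big[\min_{j\in\mathcal B^-}r_j\Big]\cdot\Big[Q-\sum_{j\in\mathcal B^-}\pi_j\Big],$$ where, if $\mathcal B^-=\emptyset$, the minimum is interpreted as $\max_{j\in\mathcal A'}r_j$. Then $\mathrm{UE}^\dagger\ge0$ and $$\min_{\mathcal B\subseteq\mathcal A'}\mathcal L^\dagger[\mathcal B]\;\le\;\mathcal L^\dagger[\widehat{\mathcal B}]\;\le\;\min_{\mathcal B\subseteq\mathcal A'}\mathcal L^\dagger[\mathcal B]+\mathrm{UE}^\dagger.$$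
   Context: Model: agents $P_1,\dots,P_m$ with quotas $q_i$ pull arms $A_1,\dots,A_n$ over stages. Agent $P_i$'s latent utility for arm $A_j$ is $v_j+e_{ij}$, where $v_j\in[0,1]$ is a score common to all agents and $e_{ij}\in[0,1]$ an agent-specific fit. For a state parameter $s\in[0,1]$, $\pi_{i,k}(s,v)\in[0,1]$ denotes the probability that an arm of score $v$ accepts $P_i$ at stage $k$; it is continuous and strictly increasing in $s$. The uncertainty measure is $\delta_{i,k}(v):=\tfrac12\big[\max_{s\in[0,1]}\pi_{i,k}(s,v)-\min_{s\in[0,1]}\pi_{i,k}(s,v)\big]$. The parameter $\eta_{i,k}\ge0$ is a regularization parameter penalizing uncertainty, and $\gamma_i$ is the marginal penalty for exceeding the quota. *)

From HB Require Import structures.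
From mathcomp Require Import all_boot all_order all_algebra.
From mathcomp Require Import all_classical all_reals all_analysis.
Set Implicit Arguments. Unset Strict Implicit. Unset Printing Implicit Defensive.
Import Order.TTheory GRing.Theory Num.Theory.
Import numFieldNormedType.Exports.
Local Open Scope classical_set_scope.
Local Open Scope ring_scope.

Section Defs.
Variable R : realType.

Definition unit_itv : set R := [set s | 0 <= s <= 1].

Definition delta_unc (pif : R -> R -> R) (x : R) : R :=
  (sup [set pif s x | s in unit_itv] - inf [set pif s x | s in unit_itv]) / 2.

Variable T : finType.
Variables (A : {set T}) (w pi delta : T -> R) (eta gamma Q : R).

(* loss L^dagger[B]; w j stands for v_j + e_ij *)
Definition loss (B : {set T}) : R :=
  \sum_(j in B) w j * (eta * delta j - pi j)
  + gamma * Num.max (\sum_(j in B) pi j - Q) 0.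

Definition ratio (j : T) : R := w j * (pi j - eta * delta j) / pi j.

Definition Sset (b : R) : {set T} := [set j in A | b <= ratio j].

Definition PiS (b : R) : R := \sum_(j in Sset b) pi j.

(* B^+ = intersection of S(b) over b >= 0 with Pi(b) > Q (intersected with A,
   harmless since b = 0 is always an index and S(0) is a subset of A) *)
Definition Bplus : {set T} :=
  [set j in A | `[< forall b, 0 <= b -> Q < PiS b -> b <= ratio j >]].

Definition Bminus : {set T} :=
  [set j in A | `[< exists b, [/\ 0 <= b, PiS b < Q & b <= ratio j] >]].

Definition maxA_ratio : R := \big[Num.max/0]_(j in A) ratio j.

Definition minBminus_ratio : R :=
  if Bminus == finset.set0 then maxA_ratio
  else \big[Num.min/maxA_ratio]_(j in Bminus) ratio j.

Definition plus_cond : bool :=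
  gamma * (\sum_(j in Bplus) pi j) - gamma * Q
  <= \sum_(j in Bplus :\: Bminus) w j * (pi j - eta * delta j).

Definition greedy (Bhat : {set T}) (UE : R) : Prop :=
  (exists b, [/\ 0 <= b, PiS b = Q, Bhat = Sset b & UE = 0])
  \/ [/\ (forall b, 0 <= b -> PiS b <> Q),
         Bhat = (if plus_cond then Bplus else Bminus)
       & UE = minBminus_ratio * (Q - \sum_(j in Bminus) pi j)].

Definition min_loss : R :=
  \big[Num.min/loss finset.set0]_(B : {set T} | B \subset A) loss B.

End Defs.
Arguments unit_itv {R}.

From Pilot Require Import Defs.
From HB Require Import structures.
From mathcomp Require Import all_boot all_order all_algebra.
From mathcomp Require Import all_classical all_reals all_analysis.
From mathcomp Require Import lra.
Import Order.TTheory GRing.Theory Num.Theory.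
Import numFieldNormedType.Exports.
Local Open Scope classical_set_scope.
Local Open Scope ring_scope.

(* Write u_j = w_j (pi_j - eta delta_j) >= 0 for the surplus of arm j, so that
   r_j = u_j / pi_j and L[B] = - sum_B u + gamma max(sum_B pi - Q, 0).  The
   whole argument rests on one threshold bound (loss_threshold_lb): if C is an
   upper set of A for the ratio at a level 0 <= rho <= gamma, then for every
   B in A, L[B] >= rho (sum_C pi - Q) - sum_C u, because gamma max(x,0) >= rho x
   and sum_B pi_j (rho - r_j) is minimised at B = C.
   - Case (i): C = S(b) with Pi(b) = Q attains this bound, so it is optimal.
   - Case (ii): B^- is an upper set of mass at most Q (it lies in one S(b)
     with Pi(b) < Q), so L[B^-] = - sum u over B^-; the threshold bound at
     the largest ratio outside B^-, which is at most min_{B^-} r, gives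
     min L >= L[B^-] - UE; and the test defining the greedy choice ensures
     L[B^+] <= L[B^-] whenever B^+ is chosen. *)

Lemma delta_unc_ge0 (R : realType) (pif : R -> R -> R) (x : R) :
  (forall s, unit_itv s -> 0 <= pif s x <= 1) -> 0 <= delta_unc pif x.
Proof.
move=> pif01; rewrite /delta_unc divr_ge0 // subr_ge0.
set E := [set pif s x | s in unit_itv].
have E0 : E (pif 0 x) by exists 0 => //; rewrite /unit_itv /= lexx ler01.
apply: (@le_trans _ _ (pif 0 x)).
  by apply: ge_inf => //; exists 0 => _ [s /pif01 /andP[? _] <-].
by apply: ub_le_sup => //; exists 1 => _ [s /pif01 /andP[_ ?] <-].
Qed.

Lemma sum_subset_le (R : numDomainType) (T : finType) (X Y : {set T})
    (f : T -> R) :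
  X \subset Y -> (forall j, j \in Y -> 0 <= f j) ->
  \sum_(j in X) f j <= \sum_(j in Y) f j.
Proof.
move=> sXY f_ge0; rewrite [X in _ <= X](big_setID X) /= (finset.setIidPr sXY) lerDl.
by apply: sumr_ge0 => j; rewrite inE => /andP[_ /f_ge0].
Qed.

Section GreedyAnalysis.
Variables (R : realType) (T : finType) (A : {set T}) (w pi delta : T -> R).
Variables (eta gamma Q : R).

Local Notation L := (Defs.loss w pi delta eta gamma Q).
Local Notation r := (Defs.ratio w pi delta eta).
Local Notation S := (Sset A w pi delta eta).
Local Notation Pi := (PiS A w pi delta eta).
Local Notation Lmin := (min_loss A w pi delta eta gamma Q).

Definition surplus (j : T) : R := w j * (pi j - eta * delta j).

Lemma lossE (B : {set T}) :
  L B = - \sum_(j in B) surplus j + gamma * Num.max (\sum_(j in B) pi j - Q) 0.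
Proof.
rewrite /Defs.loss -sumrN; congr (_ + _); apply: eq_bigr => j _.
by rewrite /surplus -mulrN opprB.
Qed.

Lemma min_loss_le (B : {set T}) : B \subset A -> Lmin <= L B.
Proof. by move=> sBA; apply: bigmin_le_cond. Qed.

Lemma le_min_loss (x : R) :
  (forall B : {set T}, B \subset A -> x <= L B) -> x <= Lmin.
Proof.
by move=> x_le; apply: le_bigmin => [|B]; apply: x_le; rewrite ?finset.sub0set.
Qed.

Hypothesis pi_pos : forall j, j \in A -> 0 < pi j.

Lemma surplusE (j : T) : j \in A -> surplus j = pi j * r j.
Proof. by move=> jA; rewrite /Defs.ratio mulrC divfK // gt_eqF ?pi_pos. Qed.

Lemma ratio_le_weight (j : T) :
  j \in A -> 0 <= w j -> 0 <= eta * delta j -> r j <= w j.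
Proof.
move=> jA w_ge0 pen_ge0; rewrite /Defs.ratio ler_pdivrMr ?pi_pos //.
by rewrite ler_wpM2l // gerBl.
Qed.

(* Indeed
   gamma * max(x, 0) >= rho * x, and sum_B pi_j (rho - r_j) is minimal at C. *)
Lemma loss_threshold_lb (rho : R) (C B : {set T}) :
  C \subset A -> 0 <= rho -> rho <= gamma ->
  (forall j, j \in C -> rho <= r j) ->
  (forall j, j \in A -> j \notin C -> r j <= rho) ->
  B \subset A ->
  rho * (\sum_(j in C) pi j - Q) - \sum_(j in C) surplus j <= L B.
Proof.
move=> sCA rho_ge0 rho_le_gamma rC rAC sBA.
pose g j := pi j * (rho - r j).
have sumg (X : {set T}) : X \subset A ->
    \sum_(j in X) g j = rho * \sum_(j in X) pi j - \sum_(j in X) surplus j.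
  move=> sXA; rewrite mulr_sumr -sumrB; apply: eq_bigr => j jX.
  by rewrite /g surplusE ?(fintype.subsetP sXA) // mulrBr mulrC.
have penalty : rho * (\sum_(j in B) pi j - Q)
               <= gamma * Num.max (\sum_(j in B) pi j - Q) 0.
  apply: (@le_trans _ _ (rho * Num.max (\sum_(j in B) pi j - Q) 0)).
    by rewrite ler_wpM2l // le_max lexx.
  by rewrite ler_wpM2r // le_max lexx orbT.
have sumg_le : \sum_(j in C) g j <= \sum_(j in B) g j.
  rewrite (big_setID B) [X in _ <= X](big_setID C) /= finset.setIC lerD //.
  apply: (@le_trans _ _ 0).
    apply: sumr_le0 => j; rewrite inE => /andP[_ jC].
    by rewrite mulr_ge0_le0 ?subr_le0 ?rC // ltW // pi_pos // (fintype.subsetP sCA).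
  apply: sumr_ge0 => j; rewrite inE => /andP[jC /(fintype.subsetP sBA) jA].
  by rewrite mulr_ge0 ?subr_ge0 ?rAC // ltW // pi_pos.
move: sumg_le; rewrite !sumg // lossE; lra.
Qed.

Hypothesis surplus_ge0 : forall j, j \in A -> 0 <= surplus j.
Hypothesis ratio_le_gamma : forall j, j \in A -> r j <= gamma.
Hypothesis gamma_ge0 : 0 <= gamma.
Hypothesis Q_gt0 : 0 < Q.

Lemma ratio_ge0 (j : T) : j \in A -> 0 <= r j.
Proof.
move=> jA; rewrite /Defs.ratio -/(surplus j).
by rewrite divr_ge0 ?surplus_ge0 // ltW ?pi_pos.
Qed.

Lemma Sset_sub (b : R) : S b \subset A.
Proof. by apply/fintype.subsetP => j; rewrite inE => /andP[]. Qed.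

Lemma PiS_antitone (b1 b2 : R) : b1 <= b2 -> Pi b2 <= Pi b1.
Proof.
move=> b12; apply: sum_subset_le => [|j /(fintype.subsetP (Sset_sub b1))].
  by apply/fintype.subsetP => j; rewrite !inE => /andP[-> /(le_trans b12)].
by move=> /pi_pos /ltW.
Qed.

(* Case (i): a superlevel set of mass exactly Q is an optimal set, by the
   threshold bound at its own level. *)
Lemma exact_superlevel_optimal (b : R) :
  0 <= b -> Pi b = Q -> L (S b) <= Lmin.
Proof.
move=> b_ge0 PiQ.
have [j jS] : exists j, j \in S b.
  by apply/set0Pn/eqP => S0; move: Q_gt0; rewrite -PiQ /PiS S0 big_set0 ltxx.
have b_le_gamma : b <= gamma.
  by move: jS; rewrite inE => /andP[/ratio_le_gamma rj_le /le_trans]; apply.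
rewrite lossE -/(Pi b) PiQ subrr maxxx mulr0 addr0.
apply: le_min_loss => B sBA.
have := loss_threshold_lb b (S b) B (Sset_sub b) b_ge0 b_le_gamma _ _ sBA.
rewrite -/(Pi b) PiQ subrr mulr0 add0r; apply.
  by move=> k; rewrite inE => /andP[].
by move=> k kA; rewrite inE kA /= -ltNge => /ltW.
Qed.

Local Notation Bm := (Bminus A w pi delta eta Q).
Local Notation Bp := (Bplus A w pi delta eta Q).

Lemma Bminus_sub : Bm \subset A.
Proof. by apply/fintype.subsetP => j; rewrite inE => /andP[]. Qed.

Lemma Bplus_sub : Bp \subset A.
Proof. by apply/fintype.subsetP => j; rewrite inE => /andP[]. Qed.

Lemma notin_Bminus_lt (j : T) (b : R) :
  j \in A -> j \notin Bm -> 0 <= b -> Pi b < Q -> r j < b.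
Proof.
move=> jA; rewrite inE jA /= => /asboolPn jBm b_ge0 PibQ.
by rewrite ltNge; apply/negP => b_le; apply: jBm; exists b.
Qed.

(* Every superlevel set of mass below Q sits inside every one of mass above Q,
   hence B^- is contained in B^+. *)
Lemma Bminus_sub_Bplus : Bm \subset Bp.
Proof.
apply/fintype.subsetP => j; rewrite !inE => /andP[jA /asboolP[b1 [b1_ge0 Pb1 b1_le]]].
rewrite jA; apply/asboolP => b b_ge0 PibQ; rewrite leNgt; apply/negP => rj_lt.
have := PiS_antitone _ _ (le_trans b1_le (ltW rj_lt)).
by rewrite leNgt (lt_trans Pb1 PibQ).
Qed.

(* A nonempty B^-, a union of a chain of superlevel sets, is contained in a
   single superlevel set of mass below Q: the one witnessing membership of
   the arm of smallest ratio. *)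
Lemma Bminus_sub_superlevel :
  Bm != finset.set0 -> exists b, [/\ 0 <= b, Pi b < Q & Bm \subset S b].
Proof.
case/set0Pn => j0 j0Bm.
case: (@arg_minP _ _ _ _ (mem Bm) r j0Bm) => i iBm i_min.
have : i \in Bm := iBm; rewrite inE => /andP[_ /asboolP[b [b_ge0 PibQ b_le]]].
exists b; split=> //; apply/fintype.subsetP => j jBm.
by rewrite inE (fintype.subsetP Bminus_sub) //= (le_trans b_le) ?i_min.
Qed.

Lemma sum_Bminus_le : \sum_(j in Bm) pi j <= Q.
Proof.
have [->|/Bminus_sub_superlevel[b [_ PibQ sBmS]]] :=
  eqVneq Bm finset.set0; first by rewrite big_set0 ltW.
apply: le_trans (ltW PibQ); apply: sum_subset_le sBmS _ => j.
by move=> /(fintype.subsetP (Sset_sub b)) /pi_pos /ltW.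
Qed.

(* The largest ratio outside B^-: a threshold separating B^- from the other
   arms of A. *)
Definition outside_ratio : R := \big[Num.max/0]_(j in A :\: Bm) r j.

Lemma outside_ratio_ge0 : 0 <= outside_ratio.
Proof. exact: bigmax_ge_id. Qed.

Lemma outside_ratio_le_gamma : outside_ratio <= gamma.
Proof.
by apply: bigmax_le => // k; rewrite inE => /andP[_ /ratio_le_gamma].
Qed.

Lemma ratio_le_outside (j : T) : j \in A -> j \notin Bm -> r j <= outside_ratio.
Proof. by move=> jA jBm; apply: le_bigmax_cond; rewrite inE jA jBm. Qed.

Lemma outside_le_ratio (j : T) : j \in Bm -> outside_ratio <= r j.
Proof.
move=> jBm; move: (jBm); rewrite inE => /andP[jA /asboolP[b [b_ge0 PibQ b_le]]].
apply: bigmax_le => [|k]; first exact: ratio_ge0.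
rewrite inE => /andP[kBm kA].
exact: ltW (lt_le_trans (notin_Bminus_lt _ _ kA kBm b_ge0 PibQ) b_le).
Qed.

Lemma outside_le_minBminus : outside_ratio <= minBminus_ratio A w pi delta eta Q.
Proof.
have le_max : outside_ratio <= maxA_ratio A w pi delta eta.
  apply: bigmax_le => [|k]; first exact: bigmax_ge_id.
  by rewrite inE => /andP[_ kA]; apply: le_bigmax_cond.
rewrite /minBminus_ratio; case: ifP => // _.
by apply: le_bigmin => // j /outside_le_ratio.
Qed.

(* Case (ii), lower side: the threshold bound at level outside_ratio, with
   C = B^-, and the fact that outside_ratio <= min_{B^-} r. *)
Lemma Bminus_min_loss_lb :
  - \sum_(j in Bm) surplus j
    - minBminus_ratio A w pi delta eta Q * (Q - \sum_(j in Bm) pi j) <= Lmin.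
Proof.
apply: le_min_loss => B sBA.
apply: le_trans (loss_threshold_lb outside_ratio Bm B Bminus_sub outside_ratio_ge0
  outside_ratio_le_gamma outside_le_ratio ratio_le_outside sBA).
have : outside_ratio * (Q - \sum_(j in Bm) pi j)
       <= minBminus_ratio A w pi delta eta Q * (Q - \sum_(j in Bm) pi j).
  by rewrite ler_wpM2r ?outside_le_minBminus // subr_ge0 sum_Bminus_le.
lra.
Qed.

(* B^- never exceeds the quota, so its loss is minus its surplus. *)
Lemma loss_Bminus : L Bm = - \sum_(j in Bm) surplus j.
Proof.
rewrite lossE.
suff -> : Num.max (\sum_(j in Bm) pi j - Q) 0 = 0 by rewrite mulr0 addr0.
by apply/max_idPr; rewrite subr_le0 sum_Bminus_le.
Qed.

(* Case (ii), upper side: the test plus_cond selects B^+ only when the extra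
   surplus of B^+ \ B^- pays for its quota penalty. *)
Lemma greedy_choice_le_Bminus :
  L (if plus_cond A w pi delta eta gamma Q then Bp else Bm) <= L Bm.
Proof.
rewrite /plus_cond; case: ifP => // extra_pays.
rewrite loss_Bminus lossE (big_setID Bm) /= (finset.setIidPr Bminus_sub_Bplus).
have extra_ge0 : 0 <= \sum_(j in Bp :\: Bm) surplus j.
  apply: sumr_ge0 => j; rewrite inE => /andP[_ /(fintype.subsetP Bplus_sub)].
  exact: surplus_ge0.
rewrite opprD -addrA gerDl.
have [_|over] := leP (\sum_(j in Bp) pi j - Q) 0.
  by rewrite mulr0 addr0 oppr_le0.
move: extra_pays; rewrite /surplus in extra_ge0 *; lra.
Qed.

Lemma greedy_bound (Bhat : {set T}) (UE : R) :
  greedy A w pi delta eta gamma Q Bhat UE ->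
  [/\ 0 <= UE, Bhat \subset A & L Bhat <= Lmin + UE].
Proof.
case=> [[b [b_ge0 PibQ -> ->]] | [_ -> ->]].
  by rewrite addr0 Sset_sub exact_superlevel_optimal.
split.
- rewrite mulr_ge0 ?subr_ge0 ?sum_Bminus_le //.
  exact: le_trans outside_ratio_ge0 outside_le_minBminus.
- by case: ifP => _; rewrite ?Bplus_sub ?Bminus_sub.
apply: le_trans greedy_choice_le_Bminus _.
by rewrite loss_Bminus; move: Bminus_min_loss_lb; lra.
Qed.

End GreedyAnalysis.
Arguments surplus {R T}.

Theorem theorem2 (R : realType) (T : finType) (A : {set T})
  (v e : T -> R) (pif : R -> R -> R) (s eta gamma : R) (q c : nat) :
  (forall s' x, unit_itv s' -> unit_itv x -> 0 <= pif s' x <= 1) ->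
  (forall x, unit_itv x -> {within unit_itv, continuous (fun s' => pif s' x)}) ->
  (forall x s1 s2, unit_itv x -> unit_itv s1 -> unit_itv s2 ->
     s1 < s2 -> pif s1 x < pif s2 x) ->
  unit_itv s ->
  A != finset.set0 ->
  (forall j, j \in A -> unit_itv (v j) /\ unit_itv (e j)) ->
  0 <= eta ->
  (forall j, j \in A -> v j + e j < gamma) ->
  (1 <= q)%N ->
  let pi := fun j => pif s (v j) in
  let delta := fun j => delta_unc pif (v j) in
  let w := fun j => v j + e j in
  let Q : R := q%:R - c%:R in
  (forall j, j \in A ->
     [/\ 0 < pi j, eta * delta j < pi j & 0 < w j]) ->
  0 < Q -> Q < \sum_(j in A) pi j ->
  forall (Bhat : {set T}) (UE : R),
    greedy A w pi delta eta gamma Q Bhat UE ->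
    [/\ 0 <= UE,
        min_loss A w pi delta eta gamma Q
          <= loss w pi delta eta gamma Q Bhat
      & loss w pi delta eta gamma Q Bhat
          <= min_loss A w pi delta eta gamma Q + UE].
Proof.
move=> pif01 _ _ _ A_neq0 ve01 eta_ge0 w_lt_gamma _ pi delta w Q arm Q_gt0 _.
move=> Bhat UE greedy_out.
have pi_pos j : j \in A -> 0 < pi j by case/arm.
have surplus_ge0 j : j \in A -> 0 <= surplus w pi delta eta j.
  by case/arm => _ pen_lt w_gt0; rewrite mulr_ge0 ?ltW ?subr_gt0.
have penalty_ge0 j : j \in A -> 0 <= eta * delta j.
  move=> /ve01[v01 _]; rewrite mulr_ge0 // delta_unc_ge0 // => s' s01.
  exact: pif01.
have ratio_le_gamma j : j \in A -> Defs.ratio w pi delta eta j <= gamma.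
  move=> jA; have [_ _ w_gt0] := arm j jA.
  apply/ltW/(le_lt_trans _ (w_lt_gamma j jA)).
  apply: (@ratio_le_weight _ _ A) => //; first exact: ltW.
  exact: penalty_ge0.
have gamma_ge0 : 0 <= gamma.
  case/set0Pn: A_neq0 => j jA; have [_ _ w_gt0] := arm j jA.
  exact: ltW (lt_trans w_gt0 (w_lt_gamma j jA)).
have [UE_ge0 sBA loss_le] := @greedy_bound _ _ A w pi delta eta gamma Q
  pi_pos surplus_ge0 ratio_le_gamma gamma_ge0 Q_gt0 Bhat UE greedy_out.
by split=> //; apply: min_loss_le.
Qed.
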